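(* Let $f:\mathbb{R}^n\to\mathbb{R}^n$ be continuously differentiable and $q:\mathbb{R}^n\to\mathbb{R}\cup\{+\infty\}$ proper, convex and lower semicontinuous. Let $\hat x\in\mathbb{R}^n$, $(\hat d,\hat d^* )\in\mathrm{gph}\,\partial q$, and let $G$ be a symmetric positive semidefinite $n\times n$ matrix with $\|G\|\le1$ such that $Gv^*\in D^*(\partial q)(\hat d,\hat d^* )((I-G)v^* )$ for all $v^*\in\mathbb{R}^n$. Assume that \[0\in\nabla f(\hat x)^Ts+D^*(\partial q)(\hat d,\hat d^* )(s)\ \Longrightarrow\ s=0.\] Then the matrix $(I-G)\nabla f(\hat x)+G$ is nonsingular and \[\|((I-G)\nabla f(\hat x)+G)^{-1}\|\le 1+\frac1\mu\|\nabla f(\hat x)-I\|,\qquad\text{where } \mu=\min_{\|s\|=1}\operatorname{dist}\bigl(0,\nabla f(\hat x)^Ts+D^*(\partial q)(\hat d,\hat d^* )(s)\bigr).\]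
   Context: $\partial q$ is the convex subdifferential, $\nabla f(\hat x)$ the Jacobian, norms are Euclidean/spectral. For a closed set $C$ and $\bar z\in C$: the regular normal cone $\widehat N_C(\bar z)$ is the polar of the tangent cone $T_C(\bar z)=\{w:\exists t_k\downarrow0,w_k\to w,\ \bar z+t_kw_k\in C\}$; the limiting normal cone $N_C(\bar z)$ consists of all limits of $z_k^*\in\widehat N_C(z_k)$ with $z_k\in C$, $z_k\to\bar z$. For a set-valued map $F$ with $(\bar x,\bar y)\in\mathrm{gph}\, F$, the limiting coderivative is $D^*F(\bar x,\bar y)(v^* )=\{u^*:(u^*,-v^* )\in N_{\mathrm{gph}\, F}(\bar x,\bar y)\}$. *)

From HB Require Import structures.
From mathcomp Require Import all_boot all_order all_algebra.
From mathcomp Require Import all_classical all_reals all_analysis.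
Set Implicit Arguments. Unset Strict Implicit. Unset Printing Implicit Defensive.
Import Order.TTheory GRing.Theory Num.Theory.
Import numFieldNormedType.Exports.
Local Open Scope classical_set_scope.
Local Open Scope ring_scope.

Section Defs.
Variable R : realType.

Definition dot m (u v : 'rV[R]_m) : R := (u *m v^T) 0 0.
Definition enorm m (v : 'rV[R]_m) : R := Num.sqrt (dot v v).

(* the action of a matrix A on a vector v, i.e. A v, written for row vectors *)
Definition mxapp m (A : 'M[R]_m) (v : 'rV[R]_m) : 'rV[R]_m := v *m A^T.

Definition opnorm m (A : 'M[R]_m) : R :=
  sup [set enorm (mxapp A v) | v in [set v : 'rV[R]_m | enorm v <= 1]].

(* the Jacobian matrix  \nabla f(x)  (entry (i,j) = d f_i / d x_j);
   the library's [jacobian] is its transpose (row-vector convention) *)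
Definition Jac m (f : 'rV[R]_m -> 'rV[R]_m) (x : 'rV[R]_m) : 'M[R]_m :=
  (jacobian f x)^T.

Definition C1 m (f : 'rV[R]_m -> 'rV[R]_m) : Prop :=
  (forall x, differentiable f x) /\ continuous (jacobian f).

Definition econv m (u : nat -> 'rV[R]_m) (l : 'rV[R]_m) : Prop :=
  (fun k => enorm (u k - l)) @ \oo --> (0 : R).

Definition proper_fun m (q : 'rV[R]_m -> \bar R) : Prop :=
  (forall x, q x != -oo%E) /\ (exists x, q x != +oo%E).

Definition convex_fun m (q : 'rV[R]_m -> \bar R) : Prop :=
  forall (x y : 'rV[R]_m) (t : R), 0 <= t <= 1 ->
    (q (t *: x + (1 - t) *: y)%R <= t%:E * q x + (1 - t)%:E * q y)%E.

Definition lsc_fun m (q : 'rV[R]_m -> \bar R) : Prop :=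
  forall (x : 'rV[R]_m) (a : R), (a%:E < q x)%E ->
    exists2 delta : R, 0 < delta &
      forall y, enorm (y - x) < delta -> (a%:E < q y)%E.

Definition subdiff m (q : 'rV[R]_m -> \bar R) (d ds : 'rV[R]_m) : Prop :=
  q d \is a fin_num /\
  forall y, (q d + (dot ds (y - d))%:E <= q y)%E.

Definition gph_subdiff m (q : 'rV[R]_m -> \bar R) : set 'rV[R]_(m + m) :=
  [set z | exists d ds, z = row_mx d ds /\ subdiff q d ds].

Definition tangent_cone m (C : set 'rV[R]_m) (z : 'rV[R]_m) : set 'rV[R]_m :=
  [set w | exists (t : nat -> R) (w_ : nat -> 'rV[R]_m),
      (forall k, 0 < t k) /\ t @ \oo --> (0 : R) /\ econv w_ w /\
      (forall k, C (z + t k *: w_ k))].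

Definition reg_normal_cone m (C : set 'rV[R]_m) (z : 'rV[R]_m) : set 'rV[R]_m :=
  [set zs | forall w, tangent_cone C z w -> dot zs w <= 0].

Definition lim_normal_cone m (C : set 'rV[R]_m) (z : 'rV[R]_m) : set 'rV[R]_m :=
  [set zs | exists (z_ zs_ : nat -> 'rV[R]_m),
      (forall k, C (z_ k)) /\ econv z_ z /\
      (forall k, reg_normal_cone C (z_ k) (zs_ k)) /\ econv zs_ zs].

Definition coderiv_subdiff m (q : 'rV[R]_m -> \bar R) (d ds vs : 'rV[R]_m)
  : set 'rV[R]_m :=
  [set us | lim_normal_cone (gph_subdiff q) (row_mx d ds) (row_mx us (- vs))].

(* distance from 0 to a set (+oo for the empty set) *)
Definition dist0 m (S : set 'rV[R]_m) : \bar R :=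
  ereal_inf [set (enorm y)%:E | y in S].

End Defs.

From HB Require Import structures.
From mathcomp Require Import all_boot all_order all_algebra.
From mathcomp Require Import all_classical all_reals all_analysis.
From mathcomp Require Import ring lra.
Import Order.TTheory GRing.Theory Num.Theory.
Import numFieldNormedType.Exports.
Local Open Scope classical_set_scope.
Local Open Scope ring_scope.
Set Implicit Arguments. Unset Strict Implicit. Unset Printing Implicit Defensive.

(* Write J = ∇f(x̂) and, for a vector u, s = (I - G) u and y = G u.  Since G is
   symmetric, y ∈ D*∂q(s) and Mᵀ u = Jᵀ s + y.  So Mᵀ u = 0 forces s = 0
   by the qualification condition, hence y = 0 and u = s + y = 0: M is nonsingular.
   The coderivative has a closed, positively homogeneous graph; by compactness of
   its part over the unit sphere the qualification condition yields μ > 0, and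
   homogeneity gives μ |s| <= |Jᵀ s + y| = |Mᵀ u|.  Finally u = Mᵀ u - (J - I)ᵀ s,
   so |u| <= (1 + |J - I| / μ) |Mᵀ u|, which bounds |M⁻ᵀ| = |M⁻¹|. *)

Section Euclidean.
Variable R : realType.

Lemma dotE m (u v : 'rV[R]_m) : dot u v = \sum_i u 0 i * v 0 i.
Proof. by rewrite /dot mxE; apply: eq_bigr => i _; rewrite mxE. Qed.

Lemma dotC m (u v : 'rV[R]_m) : dot u v = dot v u.
Proof. by rewrite !dotE; apply: eq_bigr => i _; rewrite mulrC. Qed.

Lemma dotDl m (u w v : 'rV[R]_m) : dot (u + w) v = dot u v + dot w v.
Proof. by rewrite /dot mulmxDl mxE. Qed.

Lemma dotZl m a (u v : 'rV[R]_m) : dot (a *: u) v = a * dot u v.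
Proof. by rewrite /dot -scalemxAl mxE. Qed.

Lemma dotNl m (u v : 'rV[R]_m) : dot (- u) v = - dot u v.
Proof. by rewrite /dot mulNmx mxE. Qed.

Lemma dotBl m (u w v : 'rV[R]_m) : dot (u - w) v = dot u v - dot w v.
Proof. by rewrite dotDl dotNl. Qed.

Lemma dot0l m (v : 'rV[R]_m) : dot 0 v = 0.
Proof. by rewrite /dot mul0mx mxE. Qed.

Lemma dotDr m (u w v : 'rV[R]_m) : dot v (u + w) = dot v u + dot v w.
Proof. by rewrite dotC dotDl !(dotC v). Qed.

Lemma dotZr m a (u v : 'rV[R]_m) : dot v (a *: u) = a * dot v u.
Proof. by rewrite dotC dotZl dotC. Qed.

Lemma dotNr m (u v : 'rV[R]_m) : dot v (- u) = - dot v u.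
Proof. by rewrite dotC dotNl dotC. Qed.

Lemma dotBr m (u w v : 'rV[R]_m) : dot v (u - w) = dot v u - dot v w.
Proof. by rewrite dotDr dotNr. Qed.

Lemma dot0r m (v : 'rV[R]_m) : dot v 0 = 0.
Proof. by rewrite dotC dot0l. Qed.

Lemma dot_row_mx m1 m2 (a c : 'rV[R]_m1) (b d : 'rV[R]_m2) :
  dot (row_mx a b) (row_mx c d) = dot a c + dot b d.
Proof. by rewrite /dot tr_row_mx mul_row_col mxE. Qed.

Lemma dot_mxapp m (A : 'M[R]_m) (u v : 'rV[R]_m) :
  dot u (mxapp A v) = dot (mxapp A^T u) v.
Proof. by rewrite /dot /mxapp trmx_mul !trmxK mulmxA. Qed.

Lemma dot_self_ge0 m (v : 'rV[R]_m) : 0 <= dot v v.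
Proof. by rewrite dotE; apply: sumr_ge0 => i _; rewrite -expr2 sqr_ge0. Qed.

Lemma dot_self_eq0 m (v : 'rV[R]_m) : dot v v = 0 -> v = 0.
Proof.
rewrite dotE => /eqP; rewrite psumr_eq0 => [/allP v0|i _]; last first.
  by rewrite -expr2 sqr_ge0.
apply/rowP => i; rewrite mxE; apply/eqP; rewrite -sqrf_eq0 expr2.
exact: (implyP (v0 i (mem_index_enum _))).
Qed.

Lemma enorm_ge0 m (v : 'rV[R]_m) : 0 <= enorm v.
Proof. exact: sqrtr_ge0. Qed.

Lemma enorm_sqr m (v : 'rV[R]_m) : enorm v ^+ 2 = dot v v.
Proof. by rewrite /enorm sqr_sqrtr // dot_self_ge0. Qed.

Lemma enorm0 m : enorm (0 : 'rV[R]_m) = 0.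
Proof. by rewrite /enorm dot0l sqrtr0. Qed.

Lemma enorm_eq0 m (v : 'rV[R]_m) : enorm v = 0 -> v = 0.
Proof. by move=> v0; apply: dot_self_eq0; rewrite -enorm_sqr v0 expr0n. Qed.

Lemma enorm_gt0 m (v : 'rV[R]_m) : v != 0 -> 0 < enorm v.
Proof. by move=> v0; rewrite lt0r enorm_ge0 andbT; apply: contra_neq v0 => /enorm_eq0. Qed.

Lemma enormZ m a (v : 'rV[R]_m) : enorm (a *: v) = `|a| * enorm v.
Proof. by rewrite /enorm dotZl dotZr mulrA sqrtrM ?sqr_ge0 // -expr2 sqrtr_sqr. Qed.

Lemma enormN m (v : 'rV[R]_m) : enorm (- v) = enorm v.
Proof. by rewrite -scaleN1r enormZ normrN normr1 mul1r. Qed.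

Lemma cauchy_schwarz m (u v : 'rV[R]_m) : dot u v <= enorm u * enorm v.
Proof.
have [->|u0] := eqVneq u 0; first by rewrite dot0l enorm0 mul0r.
have [->|v0] := eqVneq v 0; first by rewrite dot0r enorm0 mulr0.
set a := enorm u; set b := enorm v.
have ab_gt0 : 0 < a * b by rewrite mulr_gt0 ?enorm_gt0.
(* expand [0 <= |b u - a v|^2] *)
have := dot_self_ge0 (b *: u - a *: v).
rewrite !dotBl !dotBr !dotZl !dotZr -!enorm_sqr -/a -/b (dotC v u).
have -> : b * (b * a ^+ 2) - b * (a * dot u v) - (a * (b * dot u v) - a * (a * b ^+ 2))
   = 2 * (a * b) * (a * b - dot u v) by rewrite !expr2; ring.
by rewrite pmulr_rge0 ?subr_ge0 // mulr_gt0.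
Qed.

Lemma ler_enormD m (u v : 'rV[R]_m) : enorm (u + v) <= enorm u + enorm v.
Proof.
rewrite -ler_sqr ?nnegrE ?addr_ge0 ?enorm_ge0 //.
rewrite enorm_sqr dotDl !dotDr (dotC v u) sqrrD -!enorm_sqr.
have := cauchy_schwarz u v; lra.
Qed.

Lemma ler_enorm_dist m (u v : 'rV[R]_m) : `|enorm u - enorm v| <= enorm (u - v).
Proof.
have := ler_enormD (u - v) v; rewrite subrK.
have := ler_enormD (v - u) u; rewrite subrK -[enorm (v - u)]enormN opprB.
by rewrite ler_norml; lra.
Qed.

Lemma ler_coord_enorm m (v : 'rV[R]_m) i : `|v 0 i| <= enorm v.
Proof.
rewrite -ler_sqr ?nnegrE ?enorm_ge0 // enorm_sqr dotE real_normK ?num_real //.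
rewrite (bigD1 i) //= -expr2 lerDl.
by apply: sumr_ge0 => j _; rewrite -expr2 sqr_ge0.
Qed.

Lemma enorm_row_mx m1 m2 (a : 'rV[R]_m1) (b : 'rV[R]_m2) :
  enorm (row_mx a b) = Num.sqrt (dot a a + dot b b).
Proof. by rewrite /enorm dot_row_mx. Qed.

Lemma enorm_row_mx_le m1 m2 (a : 'rV[R]_m1) (b : 'rV[R]_m2) :
  enorm (row_mx a b) <= enorm a + enorm b.
Proof.
rewrite -ler_sqr ?nnegrE ?addr_ge0 ?enorm_ge0 //.
rewrite enorm_sqr dot_row_mx sqrrD -!enorm_sqr.
have := mulr_ge0 (enorm_ge0 a) (enorm_ge0 b); lra.
Qed.

Lemma enorm_lsubmx_le m1 m2 (z : 'rV[R]_(m1 + m2)) : enorm (lsubmx z) <= enorm z.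
Proof.
rewrite -{2}(hsubmxK z) enorm_row_mx /enorm ler_sqrt ?addr_ge0 ?dot_self_ge0 //.
by rewrite lerDl dot_self_ge0.
Qed.

Lemma enorm_rsubmx_le m1 m2 (z : 'rV[R]_(m1 + m2)) : enorm (rsubmx z) <= enorm z.
Proof.
rewrite -{2}(hsubmxK z) enorm_row_mx /enorm ler_sqrt ?addr_ge0 ?dot_self_ge0 //.
by rewrite lerDr dot_self_ge0.
Qed.

Lemma enorm_row_mx_swap m1 m2 (a : 'rV[R]_m1) (b : 'rV[R]_m2) :
  enorm (row_mx b (- a)) = enorm (row_mx a b).
Proof. by rewrite !enorm_row_mx dotNl dotNr opprK addrC. Qed.

Lemma mx_norm_le_enorm m (v : 'rV[R]_m) : `|v| <= enorm v.
Proof.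
have -> : `|v| = mx_norm v by [].
rewrite mx_normrE; apply: bigmax_le => [|[i j] _ /=].
  exact: enorm_ge0.
by rewrite (ord1 i) ler_coord_enorm.
Qed.

Lemma enorm_le_mx_norm m (v : 'rV[R]_m) : enorm v <= m%:R * `|v|.
Proof.
have coord_le i : `|v 0 i| <= `|v|.
  have -> : `|v| = mx_norm v by [].
  rewrite mx_normrE.
  exact: (le_bigmax _ (fun ij : 'I_1 * 'I_m => `|v ij.1 ij.2|) (0, i)).
rewrite -ler_sqr ?nnegrE ?enorm_ge0 ?mulr_ge0 ?normr_ge0 // enorm_sqr dotE.
apply: (@le_trans _ _ (\sum_(i < m) `|v| ^+ 2)).
  apply: ler_sum => i _; rewrite -expr2 -real_normK ?num_real //.
  by rewrite ler_sqr ?nnegrE ?normr_ge0.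
rewrite sumr_const card_ord -[`|v| ^+ 2 *+ m]mulr_natl exprMn.
have mm : m%:R <= m%:R ^+ 2 :> R.
  by case: m {v coord_le} => [|m]; rewrite ?expr0n // expr2 ler_peMl // ler1n.
by rewrite -subr_ge0 -mulrBl mulr_ge0 ?sqr_ge0 ?subr_ge0.
Qed.

End Euclidean.

Section Topology.
Variable R : realType.

Lemma lipschitz_continuous (V W : normedModType R) (f : V -> W) (k : R) :
  (forall x y, `|f x - f y| <= k * `|x - y|) -> continuous f.
Proof.
move=> fk x; apply/cvgrPdist_lt => e e0.
have k1 : 0 < `|k| + 1 by rewrite ltr_wpDl.
apply/nbhs_ballP; exists (e / (`|k| + 1)); first by rewrite /= divr_gt0.
move=> y; rewrite -ball_normE /= => xy.
have : (`|k| + 1) * `|x - y| < e by rewrite mulrC -ltr_pdivlMr.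
have := fk x y; have := ler_norm k; have := normr_ge0 (x - y); nra.
Qed.

Lemma enorm_lipschitz_continuous (W : normedModType R) m
    (f : 'rV[R]_m -> W) (k : R) :
  (forall x y, `|f x - f y| <= k * enorm (x - y)) -> continuous f.
Proof.
move=> fk; apply: (@lipschitz_continuous _ _ _ (`|k| * m%:R)) => x y.
have := fk x y; have := enorm_le_mx_norm (x - y); have := ler_norm k.
have := enorm_ge0 (x - y); have := normr_ge0 k; nra.
Qed.

Lemma continuous_enorm_comp a b (L : 'rV[R]_a -> 'rV[R]_b) (k : R) :
  (forall x y, enorm (L x - L y) <= k * enorm (x - y)) ->
  continuous (fun z => enorm (L z)).
Proof.
move=> Lk; apply: (@enorm_lipschitz_continuous _ _ _ k) => x y.
exact: le_trans (ler_enorm_dist _ _) (Lk x y).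
Qed.

Lemma enorm_bounded_closed_compact m (A : set 'rV[R]_m) (r : R) :
  closed A -> (forall z, A z -> enorm z <= r) -> compact A.
Proof.
move=> Acl Ar; apply: bounded_closed_compact => //.
exists r; split; first exact: num_real.
move=> M rM z Az; apply: le_trans (mx_norm_le_enorm z) _.
exact: le_trans (Ar z Az) (ltW rM).
Qed.

Lemma closure_enorm_approx m (A : set 'rV[R]_m) p e :
  closure A p -> 0 < e -> exists2 z, A z & enorm (z - p) < e.
Proof.
move=> clp e0; have d0 : 0 < e / m.+1%:R by rewrite divr_gt0.
have [z [Az pz]] := clp _ (nbhsx_ballx p _ d0).
exists z => //; move: pz; rewrite -ball_normE /= distrC => pz.
apply: (le_lt_trans (enorm_le_mx_norm _)).
apply: (@le_lt_trans _ _ (m%:R * (e / m.+1%:R))); first by rewrite ler_wpM2l // ltW.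
by rewrite mulrA ltr_pdivrMr // mulrC ltr_pM2l // ltr_nat.
Qed.

Lemma continuous_enorm_lsubmx a b : continuous (fun z : 'rV[R]_(a + b) => enorm (lsubmx z)).
Proof.
by apply: (continuous_enorm_comp (k := 1)) => x z; rewrite mul1r -linearB enorm_lsubmx_le.
Qed.

Lemma continuous_enorm_rsubmx a b : continuous (fun z : 'rV[R]_(a + b) => enorm (rsubmx z)).
Proof.
by apply: (continuous_enorm_comp (k := 1)) => x z; rewrite mul1r -linearB enorm_rsubmx_le.
Qed.

Lemma compact_unit_slice a b (C : R) (S : set 'rV[R]_(a + b)) : closed S ->
  compact (S `&` [set z | enorm (lsubmx z) = 1] `&` [set z | enorm (rsubmx z) <= C]).
Proof.
move=> S_closed; apply: (enorm_bounded_closed_compact (r := 1 + C)).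
  apply: closedI; first apply: closedI => //.
    exact: (continuous_closedP _).1 (@continuous_enorm_lsubmx a b) _ (@closed_eq R 1).
  exact: (continuous_closedP _).1 (@continuous_enorm_rsubmx a b) _ (@closed_le R C).
move=> z [[_ /= z1] /= zC].
by have := enorm_row_mx_le (lsubmx z) (rsubmx z); rewrite hsubmxK; lra.
Qed.

End Topology.

Section OperatorNorm.
Variables (R : realType) (m : nat).
Implicit Types (A : 'M[R]_m) (v : 'rV[R]_m).

Lemma mxapp_trmx A v : mxapp A^T v = v *m A.
Proof. by rewrite /mxapp trmxK. Qed.

Lemma enorm_mxapp_le_frobenius A v :
  enorm (mxapp A v) <= Num.sqrt (\sum_i dot (row i A) (row i A)) * enorm v.
Proof.
have rows_ge0 : 0 <= \sum_i dot (row i A) (row i A).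
  by apply: sumr_ge0 => i _; exact: dot_self_ge0.
rewrite -ler_sqr ?nnegrE ?enorm_ge0 ?mulr_ge0 ?sqrtr_ge0 //.
rewrite exprMn (sqr_sqrtr rows_ge0) [enorm (mxapp A v) ^+ 2]enorm_sqr dotE mulr_suml.
apply: ler_sum => i _; rewrite -expr2 -!enorm_sqr -exprMn.
have -> : mxapp A v 0 i = dot (row i A) v.
  by rewrite /mxapp dotE mxE; apply: eq_bigr => j _; rewrite !mxE mulrC.
rewrite -real_normK ?num_real // ler_sqr ?nnegrE ?normr_ge0 ?mulr_ge0 ?enorm_ge0 //.
rewrite ler_norml cauchy_schwarz andbT lerNl -dotNl -(enormN (row i A)).
exact: cauchy_schwarz.
Qed.

Lemma opnorm_has_sup A :
  has_sup [set enorm (mxapp A v) | v in [set v | enorm v <= 1]].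
Proof.
split; first by exists (enorm (mxapp A 0)), 0 => //=; rewrite enorm0.
exists (Num.sqrt (\sum_i dot (row i A) (row i A))) => _ [v /= v1 <-].
apply: le_trans (enorm_mxapp_le_frobenius A v) _.
by rewrite ler_piMr ?sqrtr_ge0.
Qed.

Lemma opnorm_ge0 A : 0 <= opnorm A.
Proof.
apply: le_trans (enorm_ge0 (mxapp A 0)) _.
apply: sup_upper_bound; first exact: opnorm_has_sup.
by exists 0 => //=; rewrite enorm0.
Qed.

Lemma enorm_mxapp_le A v : enorm (mxapp A v) <= opnorm A * enorm v.
Proof.
have [->|v0] := eqVneq v 0; first by rewrite /mxapp mul0mx enorm0 mulr0.
have v_gt0 := enorm_gt0 v0.
have : enorm (mxapp A ((enorm v)^-1 *: v)) <= opnorm A.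
  apply: sup_upper_bound; first exact: opnorm_has_sup.
  exists ((enorm v)^-1 *: v) => //=.
  by rewrite enormZ ger0_norm ?invr_ge0 ?enorm_ge0 // mulVf // gt_eqF.
rewrite /mxapp -scalemxAl enormZ ger0_norm ?invr_ge0 ?enorm_ge0 // mulrC.
by rewrite ler_pdivrMr.
Qed.

Lemma enorm_mxappD_ge A v y : enorm y - opnorm A * enorm v <= enorm (mxapp A v + y).
Proof.
have := enorm_mxapp_le A v; have := ler_enormD (mxapp A v + y) (- mxapp A v).
by rewrite addrAC subrr add0r enormN; lra.
Qed.

Lemma continuous_enorm_mxapp_lsubmxD A :
  continuous (fun z : 'rV[R]_(m + m) => enorm (mxapp A (lsubmx z) + rsubmx z)).
Proof.
apply: (continuous_enorm_comp (k := opnorm A + 1)) => x z.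
have -> : mxapp A (lsubmx x) + rsubmx x - (mxapp A (lsubmx z) + rsubmx z)
        = mxapp A (lsubmx (x - z)) + rsubmx (x - z).
  by rewrite !linearB /mxapp mulmxBl /= opprD addrACA.
have := ler_enormD (mxapp A (lsubmx (x - z))) (rsubmx (x - z)).
have := enorm_mxapp_le A (lsubmx (x - z)); have := enorm_lsubmx_le (x - z).
have := enorm_rsubmx_le (x - z); have := opnorm_ge0 A; nra.
Qed.

Lemma opnorm_le A (c : R) :
  0 <= c -> (forall v, enorm (mxapp A v) <= c * enorm v) -> opnorm A <= c.
Proof.
move=> c0 Ac; apply: ge_sup; first by case: (opnorm_has_sup A).
by move=> _ [v /= v1 <-]; apply: le_trans (Ac v) _; rewrite ler_piMr.
Qed.

Lemma enorm_mulmx_le A v : enorm (v *m A) <= opnorm A * enorm v.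
Proof.
set x := v *m A.
have [x0|x0] := eqVneq x 0; first by rewrite x0 enorm0 mulr_ge0 ?opnorm_ge0 ?enorm_ge0.
have : enorm x ^+ 2 <= (opnorm A * enorm v) * enorm x.
  rewrite enorm_sqr {1}/x -mxapp_trmx -dot_mxapp.
  apply: le_trans (cauchy_schwarz _ _) _.
  by rewrite mulrAC [_ * enorm v]mulrC ler_wpM2l ?enorm_ge0 // enorm_mxapp_le.
by rewrite expr2 ler_pM2r // enorm_gt0.
Qed.

Lemma opnorm_trmx_le A : opnorm A^T <= opnorm A.
Proof. by apply: opnorm_le (opnorm_ge0 A) _ => v; rewrite mxapp_trmx enorm_mulmx_le. Qed.

Lemma opnorm_invmx_le A (c : R) :
  A \in unitmx -> 0 <= c -> (forall u, enorm u <= c * enorm (u *m A)) ->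
  opnorm (invmx A) <= c.
Proof.
move=> Au c0 Ac; rewrite -[invmx A]trmxK; apply: le_trans (opnorm_trmx_le _) _.
by apply: opnorm_le c0 _ => w; rewrite mxapp_trmx; have := Ac (w *m invmx A); rewrite mulmxKV.
Qed.

End OperatorNorm.

Section NormalCones.
Variable R : realType.

Lemma econv_bound m (u : nat -> 'rV[R]_m) l (b : nat -> R) (c : R) :
  (forall k, enorm (u k - l) <= c * b k) -> b @ \oo --> 0 -> econv u l.
Proof.
move=> ub b0; apply: (@squeeze_cvgr _ _ _ _ (cst 0) (fun k => c * b k)).
- by near=> k; rewrite enorm_ge0 ub.
- exact: cvg_cst.
- by rewrite -(mulr0 c); apply: cvgMl_tmp.
Unshelve. all: by end_near.
Qed.

Lemma econvZ m (u : nat -> 'rV[R]_m) l (t : R) :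
  econv u l -> econv (fun k => t *: u k) (t *: l).
Proof. by apply: (econv_bound (c := `|t|)) => k; rewrite -scalerBr enormZ. Qed.

Lemma econv_near m (u : nat -> 'rV[R]_m) l (e : R) :
  econv u l -> 0 < e -> \forall k \near \oo, enorm (u k - l) < e.
Proof.
move=> /cvgrPdist_lt ul /ul; apply: filterS => k.
by rewrite sub0r normrN ger0_norm ?enorm_ge0.
Qed.

Lemma reg_normal_coneZ m (C : set 'rV[R]_m) z zs (t : R) :
  0 <= t -> reg_normal_cone C z zs -> reg_normal_cone C z (t *: zs).
Proof. by move=> t0 Czs w /Czs zsw; rewrite dotZl mulr_ge0_le0. Qed.

Lemma lim_normal_coneZ m (C : set 'rV[R]_m) z zs (t : R) :
  0 <= t -> lim_normal_cone C z zs -> lim_normal_cone C z (t *: zs).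
Proof.
move=> t0 [z_ [zs_ [Cz [zz [Czs zszs]]]]].
exists z_, (fun k => t *: zs_ k); do 3?split => //.
  by move=> k; exact: reg_normal_coneZ.
exact: econvZ.
Qed.

Lemma coderiv_subdiffZ m (q : 'rV[R]_m -> \bar R) d ds s y (t : R) :
  0 <= t -> coderiv_subdiff q d ds s y ->
  coderiv_subdiff q d ds (t *: s) (t *: y).
Proof.
by move=> t0; rewrite /coderiv_subdiff /= -scalerN -scale_row_mx; exact: lim_normal_coneZ.
Qed.

Lemma lim_normal_cone_closed m (C : set 'rV[R]_m) z :
  closed (lim_normal_cone C z).
Proof.
move=> zs clzs.
(* Diagonal extraction: the k-th pair is taken from a limiting normal 1/(k+1)-close to zs. *)
have approx k : exists p : 'rV[R]_m * 'rV[R]_m,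
    [/\ C p.1, reg_normal_cone C p.1 p.2, enorm (p.1 - z) <= 1 * k.+1%:R^-1
      & enorm (p.2 - zs) <= 2 * k.+1%:R^-1].
  have ek : 0 < k.+1%:R^-1 :> R by rewrite invr_gt0 ltr0Sn.
  have [zs' [z_ [zs_ [Cz [zz [Czs zszs']]]]] zs'zs] := closure_enorm_approx clzs ek.
  have [j [zj zsj]] := filter_ex (filterI (econv_near zz ek) (econv_near zszs' ek)).
  exists (z_ j, zs_ j); split => //=; first by rewrite mul1r ltW.
  rewrite -(subrK zs' (zs_ j)) -addrA; apply: le_trans (ler_enormD _ _) _.
  by rewrite -[2]/(1 + 1 : R) mulrDl mul1r lerD ?ltW.
have [p hp] := choice approx.
exists (fun k => (p k).1), (fun k => (p k).2); do 3?split.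
- by move=> k; case: (hp k).
- apply: (econv_bound (b := harmonic) (c := 1)); last exact: cvg_harmonic.
  by move=> k; case: (hp k).
- by move=> k; case: (hp k).
- apply: (econv_bound (b := harmonic) (c := 2)); last exact: cvg_harmonic.
  by move=> k; case: (hp k).
Qed.

Lemma closed_coderiv_subdiff_graph m (q : 'rV[R]_m -> \bar R) d ds :
  closed [set z : 'rV[R]_(m + m) | coderiv_subdiff q d ds (lsubmx z) (rsubmx z)].
Proof.
pose swap (z : 'rV[R]_(m + m)) := row_mx (rsubmx z) (- lsubmx z).
have swap_cont : continuous swap.
  apply: (enorm_lipschitz_continuous (k := 1)) => x y.
  rewrite mul1r (le_trans (mx_norm_le_enorm _)) // /swap opp_row_mx add_row_mx.
  by rewrite -opprD -!linearB /= enorm_row_mx_swap hsubmxK.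
change (closed (swap @^-1` lim_normal_cone (gph_subdiff q) (row_mx d ds))).
by move/continuous_closedP : swap_cont; apply; exact: lim_normal_cone_closed.
Qed.

End NormalCones.

Section InjectivityModulus.
Variables (R : realType) (n : nat) (A : 'M[R]_n) (D : 'rV[R]_n -> set 'rV[R]_n).

Definition injectivity_modulus : \bar R :=
  ereal_inf [set dist0 [set mxapp A s + y | y in D s]
            | s in [set s : 'rV[R]_n | enorm s = 1]].

Lemma injectivity_modulus_ge (r : R) :
  (forall s y, enorm s = 1 -> D s y -> r <= enorm (mxapp A s + y)) ->
  (r%:E <= injectivity_modulus)%E.
Proof.
move=> Dr; apply: le_ereal_inf_tmp => _ [s /= s1 <-].
apply: le_ereal_inf_tmp => _ [_ [y /= Dsy <-] <-].
by rewrite lee_fin; exact: Dr.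
Qed.

Hypothesis D_closed : closed [set z : 'rV[R]_(n + n) | D (lsubmx z) (rsubmx z)].
Hypothesis D_inj : forall s y, D s y -> mxapp A s + y = 0 -> s = 0.

Lemma unit_sphere_gap :
  exists2 r : R, 0 < r &
    forall s y, enorm s = 1 -> D s y -> r <= enorm (mxapp A s + y).
Proof.
pose C := opnorm A + 1.
have far s y : enorm s = 1 -> C < enorm y -> 1 <= enorm (mxapp A s + y).
  by move=> s1 yC; have := enorm_mxappD_ge A s y; rewrite s1 mulr1 /C in yC *; lra.
(* Pairs with a large [y] are trivially far from the kernel; the others form a
   compact set on which the continuous gap [g] attains a positive minimum. *)
pose K := [set z : 'rV[R]_(n + n) | D (lsubmx z) (rsubmx z)]
  `&` [set z | enorm (lsubmx z) = 1] `&` [set z | enorm (rsubmx z) <= C].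
have K_row s y : enorm s = 1 -> enorm y <= C -> D s y -> K (row_mx s y).
  by move=> s1 yC Dsy; rewrite /K /= row_mxKl row_mxKr.
have [[z0 Kz0]|K0] := pselect (K !=set0); last first.
  exists 1 => // s y s1 Dsy; case: (leP (enorm y) C) => yC; last exact: far.
  by exfalso; apply: K0; exists (row_mx s y); exact: K_row.
have K_compact : compact K := compact_unit_slice D_closed.
pose g (z : 'rV[R]_(n + n)) := enorm (mxapp A (lsubmx z) + rsubmx z).
have [c Kc cmin] := EVT_min_rV (ex_intro _ z0 Kz0) K_compact
  (continuous_subspaceT (continuous_enorm_mxapp_lsubmxD (A := A))).
rewrite inE in Kc; have [[Dc c1] _] := Kc.
have gc_gt0 : 0 < g c.
  apply: enorm_gt0; apply/eqP => /(D_inj Dc) c0.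
  by move: c1 => /=; rewrite c0 enorm0 => /eqP; rewrite eq_sym oner_eq0.
exists (Num.min (g c) 1); first by rewrite lt_min gc_gt0 ltr01.
move=> s y s1 Dsy; rewrite ge_min; apply/orP.
case: (leP (enorm y) C) => yC; last by right; exact: far.
left; have := cmin (row_mx s y); rewrite /g row_mxKl row_mxKr; apply.
by rewrite inE; exact: K_row.
Qed.

Lemma injectivity_modulus_gt0 : (0 < injectivity_modulus)%E.
Proof.
have [r r_gt0 rle] := unit_sphere_gap.
by apply: lt_le_trans (injectivity_modulus_ge rle); rewrite lte_fin.
Qed.

Hypothesis D_conic : forall (t : R) s y, 0 <= t -> D s y -> D (t *: s) (t *: y).

Lemma injectivity_modulus_le s y : D s y -> s != 0 ->
  (injectivity_modulus <= (enorm (mxapp A s + y) / enorm s)%:E)%E.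
Proof.
move=> Dsy s0; have s_gt0 := enorm_gt0 s0; set t := (enorm s)^-1.
have t_ge0 : 0 <= t by rewrite invr_ge0 ltW.
apply: le_trans (ereal_inf_lbound _) _.
  exists (t *: s); first by rewrite /= enormZ ger0_norm // mulVf // gt_eqF.
  reflexivity.
apply: ereal_inf_lbound; exists (mxapp A (t *: s) + t *: y).
  by exists (t *: y) => //; exact: D_conic.
by rewrite /= /mxapp -scalemxAl -scalerDr enormZ ger0_norm // mulrC.
Qed.

End InjectivityModulus.

Section Resolvent.
Variables (R : realType) (n : nat) (J G : 'M[R]_n) (D : 'rV[R]_n -> set 'rV[R]_n).
Hypothesis DG : forall u, D (u *m (1%:M - G)) (u *m G).
Hypothesis D_inj : forall s y, D s y -> s *m J + y = 0 -> s = 0.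
Let M := (1%:M - G) *m J + G.

Lemma mulmx_resolvent (u : 'rV[R]_n) : u *m M = u *m (1%:M - G) *m J + u *m G.
Proof. by rewrite /M mulmxDr mulmxA. Qed.

Lemma resolvent_unitmx : M \in unitmx.
Proof.
rewrite -row_free_unit; apply: inj_row_free => u uM0.
have s0 : u *m (1%:M - G) = 0 by apply: D_inj (DG u) _; rewrite -mulmx_resolvent.
have uG0 : u *m G = 0 by move: uM0; rewrite mulmx_resolvent s0 mul0mx add0r.
by move: s0; rewrite mulmxBr mulmx1 uG0 subr0.
Qed.

Lemma resolvent_decomp (u : 'rV[R]_n) :
  u = u *m M - u *m (1%:M - G) *m (J - 1%:M).
Proof.
rewrite mulmx_resolvent [in X in _ - X]mulmxBr mulmx1 opprB addrC addrA subrK.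
by rewrite mulmxBr mulmx1 subrK.
Qed.

Lemma opnorm_invmx_resolvent_le (c : R) : 0 <= c ->
  (forall s y, D s y -> s != 0 ->
     opnorm (J - 1%:M) * enorm s <= c * enorm (s *m J + y)) ->
  opnorm (invmx M) <= 1 + c.
Proof.
move=> c0 Dc; apply: opnorm_invmx_le resolvent_unitmx _ _ => [|u].
  by rewrite addr_ge0.
set s := u *m (1%:M - G).
have s_le : opnorm (J - 1%:M) * enorm s <= c * enorm (u *m M).
  have [->|s0] := eqVneq s 0.
    by rewrite enorm0 mulr0 mulr_ge0 ?enorm_ge0.
  by rewrite mulmx_resolvent; exact: Dc (DG u) s0.
have := ler_enormD (u *m M) (- (s *m (J - 1%:M))).
rewrite -resolvent_decomp enormN; have := enorm_mulmx_le (J - 1%:M) s.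
lra.
Qed.

Lemma opnorm_invmx_resolvent_modulus_le (mu : \bar R) : (0 < mu)%E ->
  (forall s y, D s y -> s != 0 -> (mu <= (enorm (s *m J + y) / enorm s)%:E)%E) ->
  ((opnorm (invmx M))%:E <= 1 + (opnorm (J - 1%:M))%:E * mu^-1)%E.
Proof.
case: mu => [r | |] // r_gt0 mu_le.
- rewrite lte_fin in r_gt0; rewrite inver gt_eqF // -EFinM -EFinD lee_fin.
  apply: opnorm_invmx_resolvent_le; first by rewrite mulr_ge0 ?opnorm_ge0 ?invr_ge0 ?ltW.
  move=> s y Dsy s0; have := mu_le s y Dsy s0.
  rewrite lee_fin ler_pdivlMr ?enorm_gt0 // mulrAC ler_pdivlMr // => rs.
  by rewrite -mulrA ler_wpM2l ?opnorm_ge0 // mulrC.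
- rewrite invey mule0 adde0 lee_fin -[leRHS]addr0.
  apply: opnorm_invmx_resolvent_le => // s y Dsy s0.
  by have := mu_le s y Dsy s0; rewrite leye_eq.
Qed.

End Resolvent.

Theorem proposition4p2 (R : realType) (n : nat)
  (f : 'rV[R]_n -> 'rV[R]_n) (q : 'rV[R]_n -> \bar R)
  (xh dh dsh : 'rV[R]_n) (G : 'M[R]_n) :
  C1 f -> proper_fun q -> convex_fun q -> lsc_fun q ->
  subdiff q dh dsh ->
  G^T = G -> (forall v : 'rV[R]_n, 0 <= dot v (mxapp G v)) ->
  opnorm G <= 1 ->
  (forall vs : 'rV[R]_n,
      coderiv_subdiff q dh dsh (mxapp (1%:M - G) vs) (mxapp G vs)) ->
  (forall s : 'rV[R]_n,
      (exists2 y, coderiv_subdiff q dh dsh s y &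
                  mxapp (Jac f xh)^T s + y = 0) -> s = 0) ->
  let M := (1%:M - G) *m Jac f xh + G in
  let mu := ereal_inf [set dist0 [set mxapp (Jac f xh)^T s + y
                                  | y in coderiv_subdiff q dh dsh s]
                      | s in [set s : 'rV[R]_n | enorm s = 1]] in
  M \in unitmx /\ (0 < mu)%E /\
  ((opnorm (invmx M))%:E <= 1 + (opnorm (Jac f xh - 1%:M))%:E * mu^-1)%E.
Proof.
move=> _ _ _ _ _ G_sym _ _ DG D_inj /=.
set J := Jac f xh; set D := coderiv_subdiff q dh dsh.
rewrite -/(injectivity_modulus J^T D); set mu := injectivity_modulus J^T D.
have D_inj_mxapp s y : D s y -> mxapp J^T s + y = 0 -> s = 0.
  by move=> Dsy sy0; apply: D_inj; exists y.
have D_inj_mulmx s y : D s y -> s *m J + y = 0 -> s = 0.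
  by rewrite -mxapp_trmx; exact: D_inj_mxapp.
have DG_mulmx u : D (u *m (1%:M - G)) (u *m G).
  by have := DG u; rewrite /mxapp linearB /= trmx1 G_sym.
have mu_gt0 : (0 < mu)%E.
  by apply: injectivity_modulus_gt0 D_inj_mxapp; exact: closed_coderiv_subdiff_graph.
have mu_le s y : D s y -> s != 0 -> (mu <= (enorm (s *m J + y) / enorm s)%:E)%E.
  by rewrite -mxapp_trmx; apply: injectivity_modulus_le => t s' y' t0; exact: coderiv_subdiffZ.
split; first exact: resolvent_unitmx DG_mulmx D_inj_mulmx.
split => //; exact (opnorm_invmx_resolvent_modulus_le DG_mulmx D_inj_mulmx mu_gt0 mu_le).
Qed.
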